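(* Let $f(x)=x^5+px^4+qx^3+rx^2+sx+t$ with real coefficients, and suppose $D=0$ and $L_1<0$ (so that $f$ has one real double root, one real simple root and two non-real complex conjugate roots). Then the double root of $f$ is $d=C_0/L_1$, and with $F_2=r+3qd+6pd^2+10d^3$: if $F_2>0$ then the real simple root is smaller than the double root, and if $F_2<0$ then the real simple root is larger than the double root.
   Context: Let $\alpha_1,\dots,\alpha_5\in\mathbb{C}$ be the roots of $f$ listed with multiplicity. $D=\prod_{1\le i<j\le 5}(\alpha_i-\alpha_j)^2$ is the discriminant of $f$. $L_1=-264ps^2r-12p^3tq^2+36r^3pq-124srpq^2+28srp^3q+260sptq-132p^2qrt+240pr^2t+234sqr^2+32p^4tr+48ptq^3-56sp^3t-80q^2rt+194qs^2p^2-600str-6q^3sp^2+2p^2q^2r^2-12sr^2p^2-54r^4+320s^3-8q^3r^2-8r^3p^3+250qt^2-176q^2s^2+24q^4s-36p^4s^2-100p^2t^2$. $C_0=48sp^4t+4sp^3r^2+80p^3t^2-32p^3rqt-3p^3s^2q+7s^2p^2r-p^2srq^2-4p^2r^2t+9p^2tq^3-266sqp^2t+16ps^3+146ptrq^2-18spr^2q+290sptr-275pqt^2+12ps^2q^2+4sq^3r-195r^2qt+260sq^2t+27sr^3+375t^2r-36q^4t-48rs^2q-400ts^2$. *)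

From HB Require Import structures.
From mathcomp Require Import all_boot all_order all_algebra.
Set Implicit Arguments. Unset Strict Implicit. Unset Printing Implicit Defensive.
Import Order.TTheory GRing.Theory Num.Theory.
Local Open Scope ring_scope.

Section Quintic.
Variable C : numClosedFieldType.
Variables p q r s t : C.

Definition quintic : {poly C} :=
  'X^5 + p *: 'X^4 + q *: 'X^3 + r *: 'X^2 + s *: 'X + t%:P.

Definition discr5 (al : 'I_5 -> C) : C :=
  \prod_(i < 5) \prod_(j < 5 | (i < j)%N) (al i - al j) ^+ 2.

Definition L1 : C :=
  -264 * p * s^+2 * r - 12 * p^+3 * t * q^+2 + 36 * r^+3 * p * q - 124 * s * r * p * q^+2 + 28 * s * r * p^+3 * q
  + 260 * s * p * t * q - 132 * p^+2 * q * r * t + 240 * p * r^+2 * t + 234 * s * q * r^+2 + 32 * p^+4 * t * r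
  + 48 * p * t * q^+3 - 56 * s * p^+3 * t - 80 * q^+2 * r * t + 194 * q * s^+2 * p^+2 - 600 * s * t * r
  - 6 * q^+3 * s * p^+2 + 2 * p^+2 * q^+2 * r^+2 - 12 * s * r^+2 * p^+2 - 54 * r^+4 + 320 * s^+3
  - 8 * q^+3 * r^+2 - 8 * r^+3 * p^+3 + 250 * q * t^+2 - 176 * q^+2 * s^+2 + 24 * q^+4 * s
  - 36 * p^+4 * s^+2 - 100 * p^+2 * t^+2.

Definition C0 : C :=
  48 * s * p^+4 * t + 4 * s * p^+3 * r^+2 + 80 * p^+3 * t^+2 - 32 * p^+3 * r * q * t - 3 * p^+3 * s^+2 * q
  + 7 * s^+2 * p^+2 * r - p^+2 * s * r * q^+2 - 4 * p^+2 * r^+2 * t + 9 * p^+2 * t * q^+3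
  - 266 * s * q * p^+2 * t + 16 * p * s^+3 + 146 * p * t * r * q^+2 - 18 * s * p * r^+2 * q + 290 * s * p * t * r
  - 275 * p * q * t^+2 + 12 * p * s^+2 * q^+2 + 4 * s * q^+3 * r - 195 * r^+2 * q * t + 260 * s * q^+2 * t
  + 27 * s * r^+3 + 375 * t^+2 * r - 36 * q^+4 * t - 48 * r * s^+2 * q - 400 * t * s^+2.

End Quintic.

Definition F2 (C : numClosedFieldType) (p q r d : C) : C :=
  r + 3 * q * d + 6 * p * d^+2 + 10 * d^+3.

(** Write [f = (X - a)^2 (X - x1)(X - x2)(X - x3)].  By Vieta,
    [L1 = 2 G^2 V^2] and [C0 = a L1], where [G = (a - x1)(a - x2)(a - x3)]
    and [V] is the Vandermonde product of [x1, x2, x3]; moreover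
    [F2(a) = G] and [f''(a) = 2 G].  Hence [d = C0 / L1 = a].  If [x1] is
    the real simple root, then [V^2] is [(x2 - x3)^2] times a real square, so
    [L1 < 0] forces [(x2 - x3)^2 < 0]: [x2, x3] are complex conjugate and
    [(a - x2)(a - x3) > 0].  Therefore [F2(a) = G] has the sign of [a - x1]. *)

From HB Require Import structures.
From mathcomp Require Import all_boot all_order all_algebra.
From mathcomp Require Import ring.
Import Order.TTheory GRing.Theory Num.Theory.
Set Implicit Arguments. Unset Strict Implicit.
Local Open Scope ring_scope.

Lemma big_card3 (R : Type) (idx : R) (op : Monoid.com_law idx) (I : finType)
    (P : pred I) (F : I -> R) :
  #|P| = 3%N -> exists x y z, \big[op/idx]_(k | P k) F k = op (F x) (op (F y) (F z)).
Proof.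
rewrite -big_enum cardE; case: (enum P) => [|x [|y [|z [|]]]] //= _.
by exists x, y, z; rewrite !big_cons big_nil Monoid.mulm1.
Qed.

Lemma discr5_eq0_repeated (C : numClosedFieldType) (al : 'I_5 -> C) :
  discr5 al = 0 -> exists i j : 'I_5, i != j /\ al i = al j.
Proof.
move/eqP/prodf_eq0 => [i _ /prodf_eq0 [j ltij]].
rewrite expf_eq0 subr_eq0 => /eqP eij.
by exists i, j; rewrite neq_ltn ltij.
Qed.

Lemma prod_XsubC_repeated (R : comNzRingType) (al : 'I_5 -> R) (i j : 'I_5) :
  i != j -> al i = al j -> exists a x1 x2 x3 : R,
  \prod_(k < 5) ('X - (al k)%:P) =
    ('X - a%:P)^+2 * (('X - x1%:P) * ('X - x2%:P) * ('X - x3%:P)).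
Proof.
move=> nij eij; rewrite (bigD1 i) // (bigD1 j) 1?eq_sym //=.
have [|x [y [z ->]]] :=
  big_card3 (P := fun k => (k != i) && (k != j)) *%R (fun k => 'X - (al k)%:P).
  have := cardD1 j (predC1 i).
  rewrite cardC1 card_ord inE /= eq_sym nij => [[card3]].
  by apply: etrans (esym card3); apply: eq_card => k; rewrite !inE andbC.
by exists (al i), (al x), (al y), (al z); rewrite -eij /=; ring.
Qed.

Lemma double_root_deriv (R : comNzRingType) (a : R) (g : {poly R}) :
  let f := ('X - a%:P)^+2 * g in
  [/\ root f a, root f^`() a & f^`()^`().[a] = 2 * g.[a]].
Proof.
set h := 'X - a%:P => f.
have dh : h^`() = 1 := derivXsubC a.
have df : f^`() = h * (g *+ 2 + h * g^`()).
  by rewrite /f derivM expr2 derivM dh; ring.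
have d2f : f^`()^`() = g *+ 2 + h * (g^`() *+ 4 + h * g^`()^`()).
  by rewrite df derivM dh derivD derivMn derivM dh; ring.
rewrite /root d2f df /f !hornerE subrr expr0n !mul0r !addr0 eqxx.
by split=> //; rewrite mulr_natl mulr2n.
Qed.

Lemma real_sqr_mul_lt0 (R : numDomainType) (x z : R) :
  x \is Num.real -> z \is Num.real -> x^+2 * z < 0 -> z < 0.
Proof.
move=> rx rz; apply: contraTT; rewrite -real_leNgt ?rpred0 // => z_ge0.
by rewrite -real_leNgt ?rpred0 ?rpredM ?rpredX // mulr_ge0 // -realEsqr.
Qed.

Lemma quadratic_gt0 (R : numDomainType) (a S P : R) :
  a \is Num.real -> S \is Num.real -> S^+2 - 4 * P < 0 ->
  0 < a^+2 - a * S + P.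
Proof.
move=> ra rS disc_lt0.
have : 0 < (2 * a - S)^+2 - (S^+2 - 4 * P).
  by rewrite ltr_wpDl ?oppr_gt0 // -realEsqr rpredB ?rpredM ?rpred_nat.
have -> : (2 * a - S)^+2 - (S^+2 - 4 * P) = 4 * (a^+2 - a * S + P) by ring.
by rewrite pmulr_rgt0 ?ltr0n.
Qed.

Lemma real_root_cmp (R : numDomainType) (a x S P : R) :
  a \is Num.real -> x \is Num.real -> S \is Num.real -> P \is Num.real ->
  ((a - x) * (a^+2 - a * S + P) * (x^+2 - x * S + P))^+2 * (S^+2 - 4 * P) < 0 ->
  (0 < (a - x) * (a^+2 - a * S + P) -> x < a) /\
  ((a - x) * (a^+2 - a * S + P) < 0 -> a < x).
Proof.
move=> ra rx rS rP L_lt0.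
have disc_lt0 : S^+2 - 4 * P < 0.
  apply: real_sqr_mul_lt0 L_lt0; first by rewrite !(rpredB, rpredD, rpredM, rpredX).
  by rewrite !(rpredB, rpredM, rpredX, rpred_nat).
have pos := quadratic_gt0 ra rS disc_lt0.
by rewrite pmulr_lgt0 // pmulr_llt0 // subr_gt0 subr_lt0.
Qed.

Lemma C0_real (C : numClosedFieldType) (p q r s t : C) :
  p \is Num.real -> q \is Num.real -> r \is Num.real ->
  s \is Num.real -> t \is Num.real -> C0 p q r s t \is Num.real.
Proof.
move=> *; rewrite /C0.
by rewrite !(rpred_nat, rpredB, rpredD, rpredM, rpredX, rpredN, rpred1).
Qed.

Section DoubleRoot.

Variables (C : numClosedFieldType) (p q r s t a x1 x2 x3 : C).
Hypothesis quinticE : quintic p q r s t =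
  ('X - a%:P)^+2 * (('X - x1%:P) * ('X - x2%:P) * ('X - x3%:P)).

Lemma quintic_vieta :
  [/\ p = -(2*a + (x1 + x2 + x3)),
      q = a^+2 + 2*a*(x1 + x2 + x3) + (x1*x2 + x1*x3 + x2*x3),
      r = -(a^+2 * (x1 + x2 + x3) + 2*a*(x1*x2 + x1*x3 + x2*x3) + x1*x2*x3),
      s = a^+2 * (x1*x2 + x1*x3 + x2*x3) + 2*a*(x1*x2*x3) &
      t = - (a^+2 * (x1*x2*x3))].
Proof.
set S := x1 + x2 + x3; set S2 := x1*x2 + x1*x3 + x2*x3; set S3 := x1*x2*x3.
have E : quintic p q r s t = 'X^5 + (-(2*a + S)) *: 'X^4
    + (a^+2 + 2*a*S + S2) *: 'X^3 + (-(a^+2 * S + 2*a*S2 + S3)) *: 'X^2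
    + (a^+2 * S2 + 2*a*S3) *: 'X + (- (a^+2 * S3))%:P.
  by rewrite quinticE -!mul_polyC /S /S2 /S3; ring.
have coef k := congr1 (fun f : {poly C} => f`_k) E.
move: (coef 0%N) (coef 1%N) (coef 2%N) (coef 3%N) (coef 4%N).
by rewrite /quintic /= !coefE /= !(mulr0, mulr1, add0r, addr0).
Qed.

Lemma L1_double_root : L1 p q r s t =
  2 * ((a - x1) * (a - x2) * (a - x3))^+2 * ((x1 - x2) * (x1 - x3) * (x2 - x3))^+2.
Proof. by have [-> -> -> -> ->] := quintic_vieta; rewrite /L1; ring. Qed.

Lemma C0_double_root : C0 p q r s t = a * L1 p q r s t.
Proof.
by rewrite L1_double_root; have [-> -> -> -> ->] := quintic_vieta; rewrite /C0; ring.
Qed.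

Lemma F2_double_root : F2 p q r a = (a - x1) * (a - x2) * (a - x3).
Proof. by have [-> -> -> _ _] := quintic_vieta; rewrite /F2; ring. Qed.

Lemma simple_root_cmp :
  p \is Num.real -> q \is Num.real -> a \is Num.real -> x1 \is Num.real ->
  L1 p q r s t < 0 ->
  (0 < F2 p q r a -> x1 < a) /\ (F2 p q r a < 0 -> a < x1).
Proof.
move=> rp rq ra rx1 L1_lt0; have [pE qE _ _ _] := quintic_vieta.
have rS : x2 + x3 \is Num.real.
  have -> : x2 + x3 = - p - 2 * a - x1 by rewrite pE; ring.
  by rewrite !(rpredB, rpredN, rpredM, rpred_nat).
have rP : x2 * x3 \is Num.real.
  have -> : x2 * x3 = q - a^+2 - 2 * a * x1 - (2 * a + x1) * (x2 + x3).
    by rewrite qE; ring.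
  by rewrite !(rpredB, rpredM, rpredX, rpred_nat) // rpredD ?rpredM ?rpred_nat.
have -> : F2 p q r a = (a - x1) * (a^+2 - a * (x2 + x3) + x2 * x3).
  by rewrite F2_double_root; ring.
apply: real_root_cmp => //.
rewrite -(pmulr_rlt0 _ (ltr0Sn C 1)); move: L1_lt0; rewrite L1_double_root.
by congr (_ < 0); ring.
Qed.

End DoubleRoot.

Lemma quintic_double_root (C : numClosedFieldType) (p q r s t a x1 x2 x3 : C)
  (hp : p \is Num.real) (hq : q \is Num.real) (hr : r \is Num.real)
  (hs : s \is Num.real) (ht : t \is Num.real)
  (quinticE : quintic p q r s t =
     ('X - a%:P)^+2 * (('X - x1%:P) * ('X - x2%:P) * ('X - x3%:P)))
  (hL1 : L1 p q r s t < 0) :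
  let d := C0 p q r s t / L1 p q r s t in
  let f := quintic p q r s t in
  [/\ d \is Num.real,
      root f d, root f^`() d, ~~ root f^`()^`() d &
      forall e : C, e \is Num.real -> root f e -> e != d ->
        (0 < F2 p q r d -> e < d) /\ (F2 p q r d < 0 -> d < e)].
Proof.
move=> d f; have L1_neq0 : L1 p q r s t != 0 by rewrite ltr0_neq0.
have da : d = a by rewrite /d (C0_double_root quinticE) mulfK.
have ra : a \is Num.real.
  by rewrite -da /d rpredM ?C0_real // rpredV ltr0_real.
clearbody d; subst d; rewrite /f quinticE.
have F2_neq0 : F2 p q r a != 0.
  apply: contra L1_neq0; rewrite (L1_double_root quinticE).
  by rewrite -(F2_double_root quinticE) => /eqP->; rewrite expr0n mulr0 mul0r.
have [fa f'a f''a] := double_root_deriv a (('X - x1%:P) * ('X - x2%:P) * ('X - x3%:P)).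
split=> //.
  rewrite /root f''a !(hornerM, hornerXsubC) -(F2_double_root quinticE).
  by rewrite mulf_neq0 ?pnatr_eq0.
move=> e re; rewrite /root !(hornerM, hornerXsubC) !mulf_eq0 orbb !subr_eq0.
case/orP=> [-> // | /orP[/orP[]|] /eqP ee _]; subst e.
- exact: simple_root_cmp quinticE hp hq ra re hL1.
- apply: (@simple_root_cmp _ p q r s t a x2 x1 x3) => //.
  by rewrite quinticE; ring.
- apply: (@simple_root_cmp _ p q r s t a x3 x1 x2) => //.
  by rewrite quinticE; ring.
Qed.

Theorem mainTheorem9 (C : numClosedFieldType) (p q r s t : C)
  (hp : p \is Num.real) (hq : q \is Num.real) (hr : r \is Num.real)
  (hs : s \is Num.real) (ht : t \is Num.real)
  (al : 'I_5 -> C)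
  (hroots : quintic p q r s t = \prod_(i < 5) ('X - (al i)%:P))
  (hD : discr5 al = 0)
  (hL1 : L1 p q r s t < 0) :
  let d := C0 p q r s t / L1 p q r s t in
  let f := quintic p q r s t in
  [/\ d \is Num.real,
      root f d, root f^`() d, ~~ root f^`()^`() d &
      forall e : C, e \is Num.real -> root f e -> e != d ->
        (0 < F2 p q r d -> e < d) /\ (F2 p q r d < 0 -> d < e)].
Proof.
have [i [j [nij eij]]] := discr5_eq0_repeated hD.
have [a [x1 [x2 [x3 factE]]]] := prod_XsubC_repeated nij eij.
exact: quintic_double_root hp hq hr hs ht (etrans hroots factE) hL1.
Qed.
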